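(* Let $e, e_1, e_2$ be terms of $\mathrm{F}_H$ and $x$ a variable, and suppose $e_1 \longrightarrow e_2$. (1) If $e[e_1/x] \longrightarrow^* v_1$ for a value $v_1$, then $e[e_2/x] \longrightarrow^* v_2$ for some value $v_2$; moreover, if $v_1 = \mathsf{true}$ then $v_2 = \mathsf{true}$. (2) If $e[e_2/x] \longrightarrow^* v_2$ for a value $v_2$, then $e[e_1/x] \longrightarrow^* v_1$ for some value $v_1$; moreover, if $v_2 = \mathsf{true}$ then $v_1 = \mathsf{true}$.
   Context: Syntax of the calculus $\mathrm{F}_H$. Fix a set of base types $B$ containing $\mathsf{Bool}$; each base type $B$ has a set $\mathcal{K}_B$ of constants (with $\mathcal{K}_{\mathsf{Bool}}=\{\mathsf{true},\mathsf{false}\}$); $k$ ranges over constants. Fix primitive operations $\mathtt{op}$, each with a denotation $[\![\mathtt{op}]\!]$, a partial function from tuples of constants to constants. Types: $T ::= B \mid \alpha \mid x{:}T_1\to T_2 \mid \forall\alpha.T \mid \{x{:}T \mid e\}$. Values: $v ::= k \mid \lambda x{:}T.e \mid \Lambda\alpha.e \mid \langle T_1\Rightarrow T_2\rangle^{\ell}$ ($\ell$ ranges over blame labels). Terms: $e ::= v \mid x \mid \mathtt{op}(e_1,\dots,e_n) \mid e_1\,e_2 \mid e\,T \mid \langle\!\langle \{x{:}T_1\mid e_1\}, e_2\rangle\!\rangle^{\ell} \mid \langle \{x{:}T_1\mid e_1\}, e_2, v\rangle^{\ell} \mid \Uparrow\ell$. Variables are not values. Substitution $e[e'/x]$ is capture-avoiding;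 $\mathsf{let}\ y{:}T = e_1\ \mathsf{in}\ e_2$ abbreviates $(\lambda y{:}T.e_2)\,e_1$. Reduction $\rightsquigarrow$: $\mathtt{op}(k_1,\dots,k_n)\rightsquigarrow[\![\mathtt{op}]\!](k_1,\dots,k_n)$; $(\lambda x{:}T.e)\,v\rightsquigarrow e[v/x]$; $(\Lambda\alpha.e)\,T\rightsquigarrow e[T/\alpha]$; $\langle B\Rightarrow B\rangle^\ell v\rightsquigarrow v$; $\langle x{:}T_{11}\to T_{12}\Rightarrow x{:}T_{21}\to T_{22}\rangle^\ell v\rightsquigarrow \lambda x{:}T_{21}.\,\mathsf{let}\ y{:}T_{11}=\langle T_{21}\Rightarrow T_{11}\rangle^\ell x\ \mathsf{in}\ \langle T_{12}[y/x]\Rightarrow T_{22}\rangle^\ell (v\,y)$ with $y$ fresh; $\langle\forall\alpha.T_1\Rightarrow\forall\alpha.T_2\rangle^\ell v\rightsquigarrow\Lambda\alpha.\langle T_1\Rightarrow T_2\rangle^\ell(v\,\alpha)$; $\langle\{x{:}T_1\mid e_1\}\Rightarrow T_2\rangle^\ell v\rightsquigarrow\langle T_1\Rightarrow T_2\rangle^\ell v$; $\langle T_1\Rightarrow\{x{:}T_2\mid e_2\}\rangle^\ell v\rightsquigarrow\langle\!\langle\{x{:}T_2\mid e_2\},\langle T_1\Rightarrow T_2\rangle^\ell v\rangle\!\rangle^\ell$ provided $T_1$ is not a refinement type; $\langle\!\langle\{x{:}T\mid e\},v\rangle\!\rangle^\ell\rightsquigarrow\langle\{x{:}T\mid e\},e[v/x],v\rangle^\ell$;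 $\langle\{x{:}T\mid e\},\mathsf{true},v\rangle^\ell\rightsquigarrow v$; $\langle\{x{:}T\mid e\},\mathsf{false},v\rangle^\ell\rightsquigarrow\Uparrow\ell$. Evaluation contexts: $E ::= [\,] \mid \mathtt{op}(v_1,\dots,v_n,E,e_1,\dots,e_m) \mid E\,e \mid v\,E \mid E\,T \mid \langle\!\langle\{x{:}T\mid e\},E\rangle\!\rangle^\ell \mid \langle\{x{:}T\mid e\},E,v\rangle^\ell$. Evaluation $\longrightarrow$: $E[e_1]\longrightarrow E[e_2]$ whenever $e_1\rightsquigarrow e_2$; $E[\Uparrow\ell]\longrightarrow\Uparrow\ell$ whenever $E\neq[\,]$. $\longrightarrow^*$ is the reflexive–transitive closure of $\longrightarrow$. *)

(* Syntax and operational semantics of the calculus F_H.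
   Binders are represented with de Bruijn indices (two index spaces: term
   variables and type variables). *)
From Stdlib Require Import List Arith.
Import ListNotations.

Set Implicit Arguments.

Record signature := Signature {
  base : Type;
  Bool : base;
  const : Type;
  const_ty : const -> base;
  ctrue : const;
  cfalse : const;
  ctrue_ty : const_ty ctrue = Bool;
  cfalse_ty : const_ty cfalse = Bool;
  ctrue_neq_cfalse : ctrue <> cfalse;
  bool_consts : forall k, const_ty k = Bool -> k = ctrue \/ k = cfalse;
  label : Type;
  opname : Type;
  denote : opname -> list const -> option const
}.

Section FH.
Variable Sg : signature.

(* TArr T1 T2   = x:T1 -> T2       (binds term variable 0 in T2)
   TAll T       = forall a. T      (binds type variable 0 in T)
   TRef T e     = {x:T | e}        (binds term variable 0 in e)
   tAbs T e     = \x:T. e          (binds term variable 0 in e)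
   tTAbs e      = /\a. e           (binds type variable 0 in e)
   tCast T1 T2 l        = <T1 => T2>^l
   tWait T p e l        = <<{x:T | p}, e>>^l     (binds term var 0 in p)
   tActive T p e v l    = <{x:T | p}, e, v>^l    (binds term var 0 in p)
   tBlame l             = Uparrow l *)
Inductive ty : Type :=
| TBase : base Sg -> ty
| TVar : nat -> ty
| TArr : ty -> ty -> ty
| TAll : ty -> ty
| TRef : ty -> tm -> ty
with tm : Type :=
| tConst : const Sg -> tm
| tVar : nat -> tm
| tOp : opname Sg -> list tm -> tm
| tAbs : ty -> tm -> tm
| tTAbs : tm -> tm
| tCast : ty -> ty -> label Sg -> tm
| tApp : tm -> tm -> tm
| tTApp : tm -> ty -> tm
| tWait : ty -> tm -> tm -> label Sg -> tm
| tActive : ty -> tm -> tm -> tm -> label Sg -> tm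
| tBlame : label Sg -> tm.

Definition is_value (e : tm) : Prop :=
  match e with
  | tConst _ | tAbs _ _ | tTAbs _ | tCast _ _ _ => True
  | _ => False
  end.

(* Well-formedness w.r.t. the grammar: the third component of an active
   check <{x:T|e}, e2, v>^l must be a value. *)
Fixpoint wf_ty (T : ty) : Prop :=
  match T with
  | TBase _ | TVar _ => True
  | TArr T1 T2 => wf_ty T1 /\ wf_ty T2
  | TAll T => wf_ty T
  | TRef T e => wf_ty T /\ wf_tm e
  end
with wf_tm (e : tm) : Prop :=
  match e with
  | tConst _ | tVar _ | tBlame _ => True
  | tOp _ es => (fix wfl (l : list tm) : Prop :=
                   match l with nil => True | e :: l => wf_tm e /\ wfl l end) es
  | tAbs T e => wf_ty T /\ wf_tm e
  | tTAbs e => wf_tm e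
  | tCast T1 T2 _ => wf_ty T1 /\ wf_ty T2
  | tApp e1 e2 => wf_tm e1 /\ wf_tm e2
  | tTApp e T => wf_tm e /\ wf_ty T
  | tWait T p e _ => wf_ty T /\ wf_tm p /\ wf_tm e
  | tActive T p e v _ => wf_ty T /\ wf_tm p /\ wf_tm e /\ wf_tm v /\ is_value v
  end.

Definition upren (xi : nat -> nat) (n : nat) : nat :=
  match n with 0 => 0 | S n => S (xi n) end.

Fixpoint ren_ty (xi zeta : nat -> nat) (T : ty) : ty :=
  match T with
  | TBase b => TBase b
  | TVar a => TVar (zeta a)
  | TArr T1 T2 => TArr (ren_ty xi zeta T1) (ren_ty (upren xi) zeta T2)
  | TAll T => TAll (ren_ty xi (upren zeta) T)
  | TRef T e => TRef (ren_ty xi zeta T) (ren_tm (upren xi) zeta e)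
  end
with ren_tm (xi zeta : nat -> nat) (e : tm) : tm :=
  match e with
  | tConst k => tConst k
  | tVar x => tVar (xi x)
  | tOp o es => tOp o (map (ren_tm xi zeta) es)
  | tAbs T e => tAbs (ren_ty xi zeta T) (ren_tm (upren xi) zeta e)
  | tTAbs e => tTAbs (ren_tm xi (upren zeta) e)
  | tCast T1 T2 l => tCast (ren_ty xi zeta T1) (ren_ty xi zeta T2) l
  | tApp e1 e2 => tApp (ren_tm xi zeta e1) (ren_tm xi zeta e2)
  | tTApp e T => tTApp (ren_tm xi zeta e) (ren_ty xi zeta T)
  | tWait T p e l =>
      tWait (ren_ty xi zeta T) (ren_tm (upren xi) zeta p) (ren_tm xi zeta e) l
  | tActive T p e v l =>
      tActive (ren_ty xi zeta T) (ren_tm (upren xi) zeta p)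
              (ren_tm xi zeta e) (ren_tm xi zeta v) l
  | tBlame l => tBlame l
  end.

Definition up_tm_tm (sigma : nat -> tm) (n : nat) : tm :=
  match n with 0 => tVar 0 | S n => ren_tm S (fun a => a) (sigma n) end.
Definition up_tm_ty (tau : nat -> ty) (n : nat) : ty :=
  ren_ty S (fun a => a) (tau n).
Definition up_ty_tm (sigma : nat -> tm) (n : nat) : tm :=
  ren_tm (fun x => x) S (sigma n).
Definition up_ty_ty (tau : nat -> ty) (n : nat) : ty :=
  match n with 0 => TVar 0 | S n => ren_ty (fun x => x) S (tau n) end.

Fixpoint subst_ty (sigma : nat -> tm) (tau : nat -> ty) (T : ty) : ty :=
  match T with
  | TBase b => TBase b
  | TVar a => tau a
  | TArr T1 T2 =>
      TArr (subst_ty sigma tau T1) (subst_ty (up_tm_tm sigma) (up_tm_ty tau) T2)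
  | TAll T => TAll (subst_ty (up_ty_tm sigma) (up_ty_ty tau) T)
  | TRef T e =>
      TRef (subst_ty sigma tau T) (subst_tm (up_tm_tm sigma) (up_tm_ty tau) e)
  end
with subst_tm (sigma : nat -> tm) (tau : nat -> ty) (e : tm) : tm :=
  match e with
  | tConst k => tConst k
  | tVar x => sigma x
  | tOp o es => tOp o (map (subst_tm sigma tau) es)
  | tAbs T e =>
      tAbs (subst_ty sigma tau T) (subst_tm (up_tm_tm sigma) (up_tm_ty tau) e)
  | tTAbs e => tTAbs (subst_tm (up_ty_tm sigma) (up_ty_ty tau) e)
  | tCast T1 T2 l => tCast (subst_ty sigma tau T1) (subst_ty sigma tau T2) l
  | tApp e1 e2 => tApp (subst_tm sigma tau e1) (subst_tm sigma tau e2)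
  | tTApp e T => tTApp (subst_tm sigma tau e) (subst_ty sigma tau T)
  | tWait T p e l =>
      tWait (subst_ty sigma tau T) (subst_tm (up_tm_tm sigma) (up_tm_ty tau) p)
            (subst_tm sigma tau e) l
  | tActive T p e v l =>
      tActive (subst_ty sigma tau T) (subst_tm (up_tm_tm sigma) (up_tm_ty tau) p)
              (subst_tm sigma tau e) (subst_tm sigma tau v) l
  | tBlame l => tBlame l
  end.

Definition open_tm (v : tm) (e : tm) : tm :=
  subst_tm (fun n => match n with 0 => v | S n => tVar n end) TVar e.
Definition open_ty (T : ty) (e : tm) : tm :=
  subst_tm tVar (fun n => match n with 0 => T | S n => TVar n end) e.

(* e[u/x] for a (free) variable x: every occurrence of x in e is replaced by u,
   capture-avoidingly; all other variables are left unchanged. *)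
Definition subst_var (x : nat) (u : tm) (e : tm) : tm :=
  subst_tm (fun n => if Nat.eqb n x then u else tVar n) TVar e.

Definition is_refinement (T : ty) : Prop :=
  match T with TRef _ _ => True | _ => False end.

Definition sh_tm (e : tm) : tm := ren_tm S (fun a => a) e.
Definition sh_ty (T : ty) : ty := ren_ty S (fun a => a) T.

Definition let_in (T : ty) (e1 e2 : tm) : tm := tApp (tAbs T e2) e1.

Inductive red : tm -> tm -> Prop :=
| red_op : forall o ks k,
    denote Sg o ks = Some k ->
    red (tOp o (map tConst ks)) (tConst k)
| red_beta : forall T e v,
    is_value v -> red (tApp (tAbs T e) v) (open_tm v e)
| red_tbeta : forall e T,
    red (tTApp (tTAbs e) T) (open_ty T e)
| red_cast_base : forall B l v,
    is_value v -> red (tApp (tCast (TBase B) (TBase B) l) v) v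
| red_cast_fun : forall T11 T12 T21 T22 l v,
    is_value v ->
    red (tApp (tCast (TArr T11 T12) (TArr T21 T22) l) v)
        (* \x:T21. let y:T11 = <T21 => T11>^l x in <T12[y/x] => T22>^l (v y) *)
        (tAbs T21
           (let_in (sh_ty T11)
              (tApp (tCast (sh_ty T21) (sh_ty T11) l) (tVar 0))
              (tApp (tCast (ren_ty (upren S) (fun a => a) T12)
                           (ren_ty S (fun a => a) T22) l)
                    (tApp (sh_tm (sh_tm v)) (tVar 0)))))
| red_cast_forall : forall T1 T2 l v,
    is_value v ->
    red (tApp (tCast (TAll T1) (TAll T2) l) v)
        (tTAbs (tApp (tCast T1 T2 l) (tTApp (ren_tm (fun x => x) S v) (TVar 0))))
| red_cast_forget : forall T1 e1 T2 l v,
    is_value v ->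
    red (tApp (tCast (TRef T1 e1) T2 l) v) (tApp (tCast T1 T2 l) v)
| red_cast_precheck : forall T1 T2 e2 l v,
    is_value v -> ~ is_refinement T1 ->
    red (tApp (tCast T1 (TRef T2 e2) l) v)
        (tWait T2 e2 (tApp (tCast T1 T2 l) v) l)
| red_check : forall T e v l,
    is_value v -> red (tWait T e v l) (tActive T e (open_tm v e) v l)
| red_ok : forall T e v l,
    is_value v -> red (tActive T e (tConst (ctrue Sg)) v l) v
| red_fail : forall T e v l,
    is_value v -> red (tActive T e (tConst (cfalse Sg)) v l) (tBlame l).

Inductive ectx : Type :=
| EHole : ectx
| EOp : opname Sg -> list tm -> ectx -> list tm -> ectx
| EAppL : ectx -> tm -> ectx
| EAppR : tm -> ectx -> ectx
| ETApp : ectx -> ty -> ectx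
| EWait : ty -> tm -> ectx -> label Sg -> ectx
| EActive : ty -> tm -> ectx -> tm -> label Sg -> ectx.

Fixpoint ectx_ok (E : ectx) : Prop :=
  match E with
  | EHole => True
  | EOp _ vs E _ => Forall is_value vs /\ ectx_ok E
  | EAppL E _ => ectx_ok E
  | EAppR v E => is_value v /\ ectx_ok E
  | ETApp E _ => ectx_ok E
  | EWait _ _ E _ => ectx_ok E
  | EActive _ _ E v _ => is_value v /\ ectx_ok E
  end.

Fixpoint plug (E : ectx) (e : tm) : tm :=
  match E with
  | EHole => e
  | EOp o vs E es => tOp o (vs ++ plug E e :: es)
  | EAppL E e2 => tApp (plug E e) e2
  | EAppR v E => tApp v (plug E e)
  | ETApp E T => tTApp (plug E e) T
  | EWait T p E l => tWait T p (plug E e) l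
  | EActive T p E v l => tActive T p (plug E e) v l
  end.

Inductive step : tm -> tm -> Prop :=
| step_red : forall E e1 e2,
    ectx_ok E -> red e1 e2 -> step (plug E e1) (plug E e2)
| step_blame : forall E l,
    ectx_ok E -> E <> EHole -> step (plug E (tBlame l)) (tBlame l).

Inductive steps : tm -> tm -> Prop :=
| steps_refl : forall e, steps e e
| steps_step : forall e1 e2 e3, step e1 e2 -> steps e2 e3 -> steps e1 e3.

End FH.

Arguments tConst {Sg} _.
Arguments tBlame {Sg} _.
Arguments TBase {Sg} _.

(* The two sides are compared through a relation [sim] on terms: the left
   term may take evaluation steps anywhere, even under binders; a blame [⇑l]
   on the left is matched by any right term that evaluates to [⇑l]; otherwise
   both terms have the same head constructor and related immediate subterms.
   Since [e1 --> e2], [e[e1/x]] is related to [e[e2/x]].  Evaluation is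
   deterministic, and a step on either side of the relation is matched by
   evaluation on the other side (on the left, after first evaluating the
   subterms in value positions), so related terms reach related values, which
   share their head constructor; in particular [true] is related only to
   [true]. *)

From Stdlib Require Import List Lia.
Import ListNotations.
Set Implicit Arguments.
Unset Strict Implicit.

Arguments tVar {Sg} _.
Arguments TVar {Sg} _.
Arguments EHole {Sg}.

Section Cotermination.
Variable Sg : signature.
Local Notation tm := (tm Sg).
Local Notation ty := (ty Sg).
Local Notation steps := (@steps Sg).

Section SyntaxInd.
Variables (P : ty -> Prop) (Q : tm -> Prop).
Hypotheses
  (HBase : forall b, P (TBase b))
  (HTVar : forall n, P (TVar n))
  (HArr : forall T1 T2, P T1 -> P T2 -> P (TArr T1 T2))
  (HAll : forall T, P T -> P (TAll T))
  (HRef : forall T e, P T -> Q e -> P (TRef T e))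
  (HConst : forall k, Q (tConst k))
  (HVar : forall n, Q (tVar n))
  (HOp : forall o es, Forall Q es -> Q (tOp o es))
  (HAbs : forall T e, P T -> Q e -> Q (tAbs T e))
  (HTAbs : forall e, Q e -> Q (tTAbs e))
  (HCast : forall T1 T2 l, P T1 -> P T2 -> Q (tCast T1 T2 l))
  (HApp : forall e1 e2, Q e1 -> Q e2 -> Q (tApp e1 e2))
  (HTApp : forall e T, Q e -> P T -> Q (tTApp e T))
  (HWait : forall T p e l, P T -> Q p -> Q e -> Q (tWait T p e l))
  (HActive : forall T p e v l, P T -> Q p -> Q e -> Q v -> Q (tActive T p e v l))
  (HBlame : forall l, Q (tBlame l)).

Fixpoint ty_ind' (T : ty) : P T :=
  match T with
  | TBase b => HBase b
  | TVar n => HTVar n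
  | TArr T1 T2 => HArr (ty_ind' T1) (ty_ind' T2)
  | TAll T => HAll (ty_ind' T)
  | TRef T e => HRef (ty_ind' T) (tm_ind' e)
  end
with tm_ind' (e : tm) : Q e :=
  match e with
  | tConst k => HConst k
  | tVar n => HVar n
  | tOp o es => HOp o ((fix go (l : list tm) : Forall Q l :=
                          match l with nil => Forall_nil _
                          | e :: l => Forall_cons _ (tm_ind' e) (go l) end) es)
  | tAbs T e => HAbs (ty_ind' T) (tm_ind' e)
  | tTAbs e => HTAbs (tm_ind' e)
  | tCast T1 T2 l => HCast l (ty_ind' T1) (ty_ind' T2)
  | tApp e1 e2 => HApp (tm_ind' e1) (tm_ind' e2)
  | tTApp e T => HTApp (tm_ind' e) (ty_ind' T)
  | tWait T p e l => HWait l (ty_ind' T) (tm_ind' p) (tm_ind' e)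
  | tActive T p e v l => HActive l (ty_ind' T) (tm_ind' p) (tm_ind' e) (tm_ind' v)
  | tBlame l => HBlame l
  end.

Lemma syntax_ind : (forall T, P T) /\ (forall e, Q e).
Proof. split; [exact ty_ind' | exact tm_ind']. Qed.
End SyntaxInd.

(** * Renaming and substitution *)

Lemma map_ext_Forall_impl (A B : Type) (P : A -> Prop) (f g : A -> B) l :
  Forall P l -> (forall x, P x -> f x = g x) -> map f l = map g l.
Proof. induction 1; simpl; intros; f_equal; auto. Qed.

Ltac syntax_congr :=
  simpl; intros; f_equal; eauto;
  try match goal with H : Forall _ ?l |- map _ ?l = map _ ?l =>
    apply map_ext_Forall_impl with (1 := H); intros; eauto end.

Ltac syntax_congr_map :=
  syntax_congr;
  try match goal with H : Forall _ ?l |- _ =>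
    rewrite map_map; apply map_ext_Forall_impl with (1 := H); intros; eauto end.

Lemma upren_ext xi xi' : (forall n, xi n = xi' n) -> forall n, upren xi n = upren xi' n.
Proof. intros H [|n]; simpl; auto. Qed.
#[local] Hint Resolve upren_ext : core.

Lemma ren_ext :
  (forall (T : ty) xi xi' z z', (forall n, xi n = xi' n) -> (forall n, z n = z' n) ->
     ren_ty xi z T = ren_ty xi' z' T) /\
  (forall (e : tm) xi xi' z z', (forall n, xi n = xi' n) -> (forall n, z n = z' n) ->
     ren_tm xi z e = ren_tm xi' z' e).
Proof. apply syntax_ind; syntax_congr. Qed.

Ltac ext_congr := first [apply (proj1 ren_ext) | apply (proj2 ren_ext)]; intros [|?]; reflexivity.

Lemma subst_ext :
  (forall (T : ty) s s' t t', (forall n, s n = s' n) -> (forall n, t n = t' n) ->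
     subst_ty s t T = subst_ty s' t' T) /\
  (forall (e : tm) s s' t t', (forall n, s n = s' n) -> (forall n, t n = t' n) ->
     subst_tm s t e = subst_tm s' t' e).
Proof.
  apply syntax_ind; syntax_congr;
  match goal with H : forall (s s' : nat -> tm) (t t' : nat -> ty), _ |- _ => apply H end;
  intros [|?]; unfold up_tm_tm, up_tm_ty, up_ty_tm, up_ty_ty; simpl; congruence.
Qed.

Lemma ren_ren :
  (forall (T : ty) xi z xi' z',
     ren_ty xi z (ren_ty xi' z' T) = ren_ty (fun n => xi (xi' n)) (fun n => z (z' n)) T) /\
  (forall (e : tm) xi z xi' z',
     ren_tm xi z (ren_tm xi' z' e) = ren_tm (fun n => xi (xi' n)) (fun n => z (z' n)) e).
Proof.
  apply syntax_ind; syntax_congr_map;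
  match goal with H : forall (xi z xi' z' : nat -> nat), _ |- _ => rewrite H end; ext_congr.
Qed.
Definition ren_ren_ty := proj1 ren_ren.
Definition ren_ren_tm := proj2 ren_ren.

Ltac up_ren_congr :=
  intros [|?]; unfold up_tm_tm, up_tm_ty, up_ty_tm, up_ty_ty; simpl;
  rewrite ?ren_ren_ty, ?ren_ren_tm; try reflexivity; ext_congr.

Ltac binder_congr up_congr :=
  match goal with
  | H : forall (a : nat -> _) (b : nat -> _) (c : nat -> _) (d : nat -> _), _ |- _ => rewrite H
  end;
  first [apply (proj1 subst_ext) | apply (proj2 subst_ext)]; up_congr.

Lemma subst_ren :
  (forall (T : ty) s t xi z,
     subst_ty s t (ren_ty xi z T) = subst_ty (fun n => s (xi n)) (fun n => t (z n)) T) /\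
  (forall (e : tm) s t xi z,
     subst_tm s t (ren_tm xi z e) = subst_tm (fun n => s (xi n)) (fun n => t (z n)) e).
Proof. apply syntax_ind; syntax_congr_map; binder_congr up_ren_congr. Qed.
Definition subst_ren_ty := proj1 subst_ren.
Definition subst_ren_tm := proj2 subst_ren.

Lemma ren_subst :
  (forall (T : ty) s t xi z, ren_ty xi z (subst_ty s t T) =
     subst_ty (fun n => ren_tm xi z (s n)) (fun n => ren_ty xi z (t n)) T) /\
  (forall (e : tm) s t xi z, ren_tm xi z (subst_tm s t e) =
     subst_tm (fun n => ren_tm xi z (s n)) (fun n => ren_ty xi z (t n)) e).
Proof. apply syntax_ind; syntax_congr_map; binder_congr up_ren_congr. Qed.
Definition ren_subst_ty := proj1 ren_subst.
Definition ren_subst_tm := proj2 ren_subst.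

Ltac up_subst_congr :=
  intros [|?]; unfold up_tm_tm, up_tm_ty, up_ty_tm, up_ty_ty; simpl;
  rewrite ?ren_subst_ty, ?ren_subst_tm, ?subst_ren_ty, ?subst_ren_tm; try reflexivity;
  first [apply (proj1 subst_ext) | apply (proj2 subst_ext)]; intros [|?]; reflexivity.

Lemma subst_subst :
  (forall (T : ty) s t s' t', subst_ty s t (subst_ty s' t' T) =
     subst_ty (fun n => subst_tm s t (s' n)) (fun n => subst_ty s t (t' n)) T) /\
  (forall (e : tm) s t s' t', subst_tm s t (subst_tm s' t' e) =
     subst_tm (fun n => subst_tm s t (s' n)) (fun n => subst_ty s t (t' n)) e).
Proof. apply syntax_ind; syntax_congr_map; binder_congr up_subst_congr. Qed.
Definition subst_subst_tm := proj2 subst_subst.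

Lemma subst_id :
  (forall (T : ty), subst_ty tVar TVar T = T) /\ (forall (e : tm), subst_tm tVar TVar e = e).
Proof.
  apply syntax_ind; syntax_congr;
  try (rewrite <- map_id; apply map_ext_Forall_impl with (1 := H); intros; eauto);
  (etransitivity; [|eassumption]);
  first [apply (proj1 subst_ext) | apply (proj2 subst_ext)]; intros [|?]; reflexivity.
Qed.

Lemma ren_as_subst :
  (forall (T : ty) xi z, ren_ty xi z T = subst_ty (fun n => tVar (xi n)) (fun n => TVar (z n)) T) /\
  (forall (e : tm) xi z, ren_tm xi z e = subst_tm (fun n => tVar (xi n)) (fun n => TVar (z n)) e).
Proof.
  apply syntax_ind; syntax_congr;
  match goal with H : forall (a : nat -> _) (b : nat -> _), _ |- _ => rewrite H end;
  first [apply (proj1 subst_ext) | apply (proj2 subst_ext)]; intros [|?]; reflexivity.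
Qed.

Lemma subst_open_tm (s : nat -> tm) (t : nat -> ty) v e :
  subst_tm s t (open_tm v e) = open_tm (subst_tm s t v) (subst_tm (up_tm_tm s) (up_tm_ty t) e).
Proof.
  unfold open_tm; rewrite !subst_subst_tm; apply (proj2 subst_ext).
  - intros [|n]; simpl; auto. unfold up_tm_tm. rewrite subst_ren_tm.
    symmetry; apply (proj2 subst_id).
  - intros n; simpl. unfold up_tm_ty. rewrite subst_ren_ty.
    symmetry; apply (proj1 subst_id).
Qed.

Lemma subst_open_ty (s : nat -> tm) (t : nat -> ty) T e :
  subst_tm s t (open_ty T e) = open_ty (subst_ty s t T) (subst_tm (up_ty_tm s) (up_ty_ty t) e).
Proof.
  unfold open_ty; rewrite !subst_subst_tm; apply (proj2 subst_ext).
  - intros n; simpl. unfold up_ty_tm. rewrite subst_ren_tm.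
    symmetry; apply (proj2 subst_id).
  - intros [|n]; simpl; auto. unfold up_ty_ty. rewrite subst_ren_ty.
    symmetry; apply (proj1 subst_id).
Qed.

Lemma value_subst s t (v : tm) : is_value v -> is_value (subst_tm s t v).
Proof. destruct v; simpl; tauto. Qed.

Lemma value_ren xi z (v : tm) : is_value v -> is_value (ren_tm xi z v).
Proof. destruct v; simpl; tauto. Qed.

Definition ty_renaming (t : nat -> ty) := forall n, exists m, t n = TVar m.

Lemma refinement_subst s t (T : ty) :
  ty_renaming t -> ~ is_refinement T -> ~ is_refinement (subst_ty s t T).
Proof. intros Ht; destruct T; simpl; try tauto. destruct (Ht n) as [m ->]; simpl; tauto. Qed.

Definition cast_arr_result (T11 T12 T21 T22 : ty) l (v : tm) : tm :=
  tAbs T21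
    (let_in (sh_ty T11)
       (tApp (tCast (sh_ty T21) (sh_ty T11) l) (tVar 0))
       (tApp (tCast (ren_ty (upren S) (fun a => a) T12) (ren_ty S (fun a => a) T22) l)
             (tApp (sh_tm (sh_tm v)) (tVar 0)))).

Definition cast_all_result (T1 T2 : ty) l (v : tm) : tm :=
  tTAbs (tApp (tCast T1 T2 l) (tTApp (ren_tm (fun x => x) S v) (TVar 0))).

Lemma subst_cast_arr_result s t T11 T12 T21 T22 l v :
  subst_tm s t (cast_arr_result T11 T12 T21 T22 l v) =
  cast_arr_result (subst_ty s t T11) (subst_ty (up_tm_tm s) (up_tm_ty t) T12)
    (subst_ty s t T21) (subst_ty (up_tm_tm s) (up_tm_ty t) T22) l (subst_tm s t v).
Proof.
  unfold cast_arr_result, let_in, sh_ty, sh_tm; simpl; repeat f_equal;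
  rewrite ?ren_subst_ty, ?ren_subst_tm, ?subst_ren_ty, ?subst_ren_tm;
  first [apply (proj1 subst_ext) | apply (proj2 subst_ext)]; up_ren_congr.
Qed.

Lemma subst_cast_all_result s t T1 T2 l v :
  subst_tm s t (cast_all_result T1 T2 l v) =
  cast_all_result (subst_ty (up_ty_tm s) (up_ty_ty t) T1) (subst_ty (up_ty_tm s) (up_ty_ty t) T2)
    l (subst_tm s t v).
Proof.
  unfold cast_all_result; simpl; repeat f_equal;
  rewrite ?ren_subst_tm, ?subst_ren_tm; apply (proj2 subst_ext); up_ren_congr.
Qed.

Lemma red_subst s t (a b : tm) : ty_renaming t -> red a b -> red (subst_tm s t a) (subst_tm s t b).
Proof.
  intros Ht; destruct 1; simpl; try solve [constructor; auto using value_subst, refinement_subst].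
  - rewrite map_map; simpl. rewrite <- (map_map tConst (fun x => x)), map_id.
    constructor; auto.
  - rewrite subst_open_tm. constructor. apply value_subst; auto.
  - rewrite subst_open_ty. constructor.
  - change (red (subst_tm s t (tApp (tCast (TArr T11 T12) (TArr T21 T22) l) v))
                (subst_tm s t (cast_arr_result T11 T12 T21 T22 l v))).
    rewrite subst_cast_arr_result. apply red_cast_fun, value_subst; auto.
  - change (red (subst_tm s t (tApp (tCast (TAll T1) (TAll T2) l) v))
                (subst_tm s t (cast_all_result T1 T2 l v))).
    rewrite subst_cast_all_result. apply red_cast_forall, value_subst; auto.
  - rewrite subst_open_tm. constructor. apply value_subst; auto.
Qed.

(** * Evaluation one frame at a time *)

Inductive frame : Type :=
| FOp : opname Sg -> list tm -> list tm -> frame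
| FAppL : tm -> frame
| FAppR : tm -> frame
| FTApp : ty -> frame
| FWait : ty -> tm -> label Sg -> frame
| FActive : ty -> tm -> tm -> label Sg -> frame.

Definition fill (F : frame) (a : tm) : tm :=
  match F with
  | FOp o vs es => tOp o (vs ++ a :: es)
  | FAppL e => tApp a e
  | FAppR v => tApp v a
  | FTApp T => tTApp a T
  | FWait T p l => tWait T p a l
  | FActive T p v l => tActive T p a v l
  end.

Definition frame_ok (F : frame) : Prop :=
  match F with
  | FOp _ vs _ => Forall (@is_value Sg) vs
  | FAppR v => is_value v
  | FActive _ _ v _ => is_value v
  | _ => True
  end.

Definition frame_ectx (F : frame) (E : ectx Sg) : ectx Sg :=
  match F with
  | FOp o vs es => EOp o vs E es
  | FAppL e => EAppL E e
  | FAppR v => EAppR v E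
  | FTApp T => ETApp E T
  | FWait T p l => EWait T p E l
  | FActive T p v l => EActive T p E v l
  end.

Lemma plug_frame_ectx F E e : plug (frame_ectx F E) e = fill F (plug E e).
Proof. destruct F; reflexivity. Qed.

Lemma frame_ectx_ok F E : frame_ok F -> ectx_ok E -> ectx_ok (frame_ectx F E).
Proof. destruct F; simpl; tauto. Qed.

Lemma ectx_frames (P : ectx Sg -> Prop) :
  P EHole -> (forall F E, frame_ok F -> ectx_ok E -> P E -> P (frame_ectx F E)) ->
  forall E, ectx_ok E -> P E.
Proof.
  intros H0 HF; induction E; simpl; intros HE; auto;
  [apply (HF (FOp o l l0)) | apply (HF (FAppL t)) | apply (HF (FAppR t))
  | apply (HF (FTApp t)) | apply (HF (FWait t t0 l)) | apply (HF (FActive t t0 t1 l))];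
  simpl; tauto.
Qed.

Inductive ctx_red : tm -> tm -> Prop :=
| ctx_red_here a b : red a b -> ctx_red a b
| ctx_red_frame F a b : frame_ok F -> ctx_red a b -> ctx_red (fill F a) (fill F b).

Inductive raises : tm -> label Sg -> Prop :=
| raises_here l : raises (tBlame l) l
| raises_frame F a l : frame_ok F -> raises a l -> raises (fill F a) l.

Inductive fstep : tm -> tm -> Prop :=
| fstep_red a b : ctx_red a b -> fstep a b
| fstep_blame F a l : frame_ok F -> raises a l -> fstep (fill F a) (tBlame l).

Lemma ctx_red_plug E (r r' : tm) : ectx_ok E -> red r r' -> ctx_red (plug E r) (plug E r').
Proof.
  intros HE Hr; revert E HE; apply ectx_frames; intros.
  - exact (ctx_red_here Hr).
  - rewrite !plug_frame_ectx; apply ctx_red_frame; auto.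
Qed.

Lemma raises_plug E l : ectx_ok E -> raises (plug E (tBlame l)) l.
Proof.
  revert E; apply ectx_frames; intros.
  - constructor.
  - rewrite plug_frame_ectx; apply raises_frame; auto.
Qed.

Lemma ctx_red_plug_inv a b :
  ctx_red a b -> exists E r r', ectx_ok E /\ red r r' /\ a = plug E r /\ b = plug E r'.
Proof.
  induction 1.
  - exists EHole, a, b; simpl; auto.
  - destruct IHctx_red as (E & r & r' & H1 & H2 & -> & ->).
    exists (frame_ectx F E), r, r'; rewrite !plug_frame_ectx; auto using frame_ectx_ok.
Qed.

Lemma raises_plug_inv a l : raises a l -> exists E, ectx_ok E /\ a = plug E (tBlame l).
Proof.
  induction 1.
  - exists EHole; simpl; auto.
  - destruct IHraises as (E & H1 & ->).
    exists (frame_ectx F E); rewrite plug_frame_ectx; auto using frame_ectx_ok.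
Qed.

Lemma ectx_outer_frame E : ectx_ok E -> E <> EHole ->
  exists F E', frame_ok F /\ ectx_ok E' /\ E = frame_ectx F E'.
Proof.
  destruct E; simpl; intros HE Hne; try congruence;
  [exists (FOp o l l0) | exists (FAppL t) | exists (FAppR t)
  | exists (FTApp t) | exists (FWait t t0 l) | exists (FActive t t0 t1 l)];
  exists E; simpl; tauto.
Qed.

Lemma step_fstep a b : step a b -> fstep a b.
Proof.
  destruct 1 as [E e1 e2 HE Hr | E l HE Hne].
  - constructor. apply ctx_red_plug; auto.
  - destruct (ectx_outer_frame HE Hne) as (F & E' & HF & HE' & ->).
    rewrite plug_frame_ectx; apply fstep_blame; auto using raises_plug.
Qed.

Lemma fstep_step a b : fstep a b -> step a b.
Proof.
  destruct 1 as [a b H | F a l HF H].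
  - destruct (ctx_red_plug_inv H) as (E & r & r' & H1 & H2 & -> & ->). constructor; auto.
  - destruct (raises_plug_inv H) as (E & H1 & ->). rewrite <- plug_frame_ectx. constructor.
    + apply frame_ectx_ok; auto.
    + destruct F; discriminate.
Qed.

(** * Determinism *)

Lemma fstep_steps (a b c : tm) : fstep a b -> steps b c -> steps a c.
Proof. intros H; apply steps_step, fstep_step, H. Qed.

Lemma steps_one (a b : tm) : fstep a b -> steps a b.
Proof. intros H; apply (fstep_steps H), steps_refl. Qed.

Lemma steps_trans (a b c : tm) : steps a b -> steps b c -> steps a c.
Proof. induction 1; intros; auto. econstructor; eauto. Qed.

Lemma red_not_value (a b : tm) : red a b -> ~ is_value a.
Proof. destruct 1; simpl; tauto. Qed.

Lemma fill_not_value F (a : tm) : ~ is_value (fill F a).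
Proof. destruct F; simpl; tauto. Qed.

Lemma fill_not_blame F (a : tm) l : fill F a <> tBlame l.
Proof. destruct F; discriminate. Qed.

Lemma ctx_red_not_value (a b : tm) : ctx_red a b -> ~ is_value a.
Proof. destruct 1; [eapply red_not_value; eauto | apply fill_not_value]. Qed.

Lemma raises_not_value (a : tm) l : raises a l -> ~ is_value a.
Proof. destruct 1; [simpl; tauto | apply fill_not_value]. Qed.

Lemma fstep_not_value (a b : tm) : fstep a b -> ~ is_value a.
Proof. destruct 1; [eapply ctx_red_not_value; eauto | apply fill_not_value]. Qed.

Lemma blame_irreducible (b : tm) l : ~ fstep (tBlame l) b.
Proof.
  intro H; inversion H as [a b' Hr | F a l' HF Hr]; subst.
  - inversion Hr as [? ? Hred | F a a' HF Hr']; subst.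
    + inversion Hred.
    + eapply fill_not_blame; eauto.
  - eapply fill_not_blame; eauto.
Qed.

Lemma red_fill_value F (a b : tm) : red (fill F a) b -> is_value a.
Proof.
  intros H; destruct F; simpl in H; inversion H; subst; simpl; auto.
  match goal with E : map _ _ = _ |- _ =>
    apply (Forall_elt a l l0); rewrite <- E; apply Forall_map, Forall_forall; simpl; auto end.
Qed.

Lemma app_value_prefix_inj (vs vs' es es' : list tm) (a a' : tm) :
  Forall (@is_value Sg) vs -> Forall (@is_value Sg) vs' -> ~ is_value a -> ~ is_value a' ->
  vs ++ a :: es = vs' ++ a' :: es' -> vs = vs' /\ a = a' /\ es = es'.
Proof.
  intros H; revert vs'; induction H; intros vs' H' Ha Ha' E; destruct vs'; simpl in *;
    inversion E; subst; auto.
  - inversion H'; subst; tauto.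
  - tauto.
  - inversion H'; subst. destruct (IHForall vs') as (-> & -> & ->); auto.
Qed.

Lemma fill_inj F F' (a a' : tm) : frame_ok F -> frame_ok F' -> ~ is_value a -> ~ is_value a' ->
  fill F a = fill F' a' -> F = F' /\ a = a'.
Proof.
  intros HF HF' Ha Ha' E; destruct F, F'; simpl in *; inversion E; subst; try tauto.
  destruct (@app_value_prefix_inj l l1 l0 l2 a a' HF HF' Ha Ha' H1) as (-> & -> & ->); auto.
Qed.

Lemma map_inj_eq (A B : Type) (f : A -> B) :
  (forall x y, f x = f y -> x = y) -> forall l l', map f l = map f l' -> l = l'.
Proof.
  intros Hf; induction l; destruct l'; simpl; intros E; try discriminate; auto.
  inversion E; f_equal; auto.
Qed.

Lemma red_det (a b c : tm) : red a b -> red a c -> b = c.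
Proof.
  intros H1 H2; inversion H1; subst; inversion H2; subst; auto; try congruence;
  try (simpl in *; tauto).
  all: try (exfalso; apply (ctrue_neq_cfalse Sg); congruence).
  match goal with E : map _ ?x = map _ ?y |- _ =>
    apply map_inj_eq in E; [|intros ? ? Ek; injection Ek; auto] end.
  subst; congruence.
Qed.

Lemma ctx_red_det (a b : tm) : ctx_red a b -> forall c, ctx_red a c -> b = c.
Proof.
  induction 1 as [a b Hr | F a b HF Hab IH]; intros c Hc;
  inversion Hc as [? ? Hr' | F' a' c' HF' Hr' E1 E2]; subst.
  - eapply red_det; eauto.
  - exfalso; eapply ctx_red_not_value; [exact Hr' | eapply red_fill_value; eauto].
  - exfalso; eapply ctx_red_not_value; [exact Hab | eapply red_fill_value; eauto].
  - destruct (fill_inj HF HF' (ctx_red_not_value Hab) (ctx_red_not_value Hr') (eq_sym E1))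
      as [-> ->].
    f_equal; auto.
Qed.

Lemma ctx_red_not_raises (a b : tm) : ctx_red a b -> forall l, ~ raises a l.
Proof.
  induction 1 as [a b Hr | F a b HF Hab IH]; intros l Hl;
  inversion Hl as [l' E | F' a' l' HF' Hl' E]; subst.
  - inversion Hr.
  - eapply raises_not_value; [exact Hl' | eapply red_fill_value; eauto].
  - eapply fill_not_blame; eauto.
  - destruct (fill_inj HF HF' (ctx_red_not_value Hab) (raises_not_value Hl') (eq_sym E))
      as [-> ->].
    eapply IH; eauto.
Qed.

Lemma raises_det (a : tm) l : raises a l -> forall l', raises a l' -> l = l'.
Proof.
  induction 1 as [l | F a l HF Ha IH]; intros l' Hl';
  inversion Hl' as [l'' E | F' a' l'' HF' Ha' E]; subst.
  - reflexivity.
  - exfalso; eapply fill_not_blame; eauto.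
  - exfalso; eapply fill_not_blame; eauto.
  - destruct (fill_inj HF HF' (raises_not_value Ha) (raises_not_value Ha') (eq_sym E))
      as [-> ->].
    auto.
Qed.

Lemma fstep_det (a b c : tm) : fstep a b -> fstep a c -> b = c.
Proof.
  destruct 1 as [a b Hab | F a l HF Ha]; inversion 1 as [? ? Hac | F' a' l' HF' Ha' E]; subst.
  - eapply ctx_red_det; eauto.
  - exfalso; eapply ctx_red_not_raises; [exact Hab | apply raises_frame; eauto].
  - exfalso; eapply ctx_red_not_raises; [exact Hac | apply raises_frame; eauto].
  - destruct (fill_inj HF HF' (raises_not_value Ha) (raises_not_value Ha') (eq_sym E))
      as [-> ->].
    f_equal; eapply raises_det; eauto.
Qed.

Definition normal (a : tm) := forall b, ~ fstep a b.

Lemma value_normal (v : tm) : is_value v -> normal v.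
Proof. intros Hv b Hs. eapply fstep_not_value; eauto. Qed.

Lemma blame_normal l : normal (tBlame l).
Proof. intros b; apply blame_irreducible. Qed.

Lemma steps_from_normal (a b : tm) : steps a b -> normal a -> a = b.
Proof. destruct 1 as [|a a' b H]; auto. intros Hn; exfalso; eapply Hn, step_fstep, H. Qed.

Lemma steps_to_normal (a b c : tm) : steps a b -> steps a c -> normal c -> steps b c.
Proof.
  intros H; revert c; induction H as [|a a' b Ha Hb IH]; intros c Hc Hn; auto.
  destruct Hc as [|a a'' c Ha' Hc].
  - exfalso; eapply Hn, step_fstep, Ha.
  - rewrite (fstep_det (step_fstep Ha) (step_fstep Ha')) in *. auto.
Qed.

(** * Stability under substitution *)

Definition subst_frame s t (F : frame) : frame :=
  match F with
  | FOp o vs es => FOp o (map (subst_tm s t) vs) (map (subst_tm s t) es)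
  | FAppL e => FAppL (subst_tm s t e)
  | FAppR v => FAppR (subst_tm s t v)
  | FTApp T => FTApp (subst_ty s t T)
  | FWait T p l => FWait (subst_ty s t T) (subst_tm (up_tm_tm s) (up_tm_ty t) p) l
  | FActive T p v l =>
      FActive (subst_ty s t T) (subst_tm (up_tm_tm s) (up_tm_ty t) p) (subst_tm s t v) l
  end.

Lemma subst_fill s t F a : subst_tm s t (fill F a) = fill (subst_frame s t F) (subst_tm s t a).
Proof. destruct F; simpl; auto. rewrite map_app; reflexivity. Qed.

Lemma frame_ok_subst s t F : frame_ok F -> frame_ok (subst_frame s t F).
Proof.
  destruct F; simpl; auto using value_subst.
  intros H; apply Forall_map; eapply Forall_impl; [|exact H]; auto using value_subst.
Qed.

Lemma ctx_red_subst s t (a b : tm) :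
  ty_renaming t -> ctx_red a b -> ctx_red (subst_tm s t a) (subst_tm s t b).
Proof.
  intros Ht; induction 1.
  - constructor; apply red_subst; auto.
  - rewrite !subst_fill; apply ctx_red_frame; auto using frame_ok_subst.
Qed.

Lemma raises_subst s t (a : tm) l : raises a l -> raises (subst_tm s t a) l.
Proof.
  induction 1; simpl.
  - constructor.
  - rewrite subst_fill; apply raises_frame; auto using frame_ok_subst.
Qed.

Lemma fstep_subst s t (a b : tm) :
  ty_renaming t -> fstep a b -> fstep (subst_tm s t a) (subst_tm s t b).
Proof.
  intros Ht; destruct 1.
  - constructor; apply ctx_red_subst; auto.
  - rewrite subst_fill; simpl; apply fstep_blame; auto using frame_ok_subst, raises_subst.
Qed.

Lemma steps_subst s t (a b : tm) :
  ty_renaming t -> steps a b -> steps (subst_tm s t a) (subst_tm s t b).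
Proof.
  intros Ht; induction 1; [constructor|].
  eapply fstep_steps; eauto using fstep_subst, step_fstep.
Qed.

(* Reduction is not stable under all type substitutions: instantiating a type
   variable with a refinement type disables the rule [red_cast_precheck].  A
   relation is [stable k] when it survives every substitution keeping the free
   type variables [>= k] variables; the [k] innermost ones, bound by enclosing
   type abstractions, may become arbitrary types through [red_tbeta]. *)
Definition stable k (R : tm -> tm -> Prop) (a b : tm) : Prop :=
  forall s t, (forall n, k <= n -> exists m, t n = TVar m) -> R (subst_tm s t a) (subst_tm s t b).

Lemma fstep_stable (a b : tm) : fstep a b -> stable 0 fstep a b.
Proof. intros H s t Ht; apply fstep_subst; auto. intros n; apply Ht; lia. Qed.

Lemma steps_stable (a b : tm) : steps a b -> stable 0 steps a b.
Proof. intros H s t Ht; apply steps_subst; auto. intros n; apply Ht; lia. Qed.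

Lemma stable_holds k R (a b : tm) : stable k R a b -> R a b.
Proof.
  intros H. specialize (H tVar TVar (fun n _ => ex_intro _ n eq_refl)).
  rewrite !(proj2 subst_id) in H; auto.
Qed.

Lemma stable_subst k j R (a b : tm) s t :
  (forall n, k <= n -> exists m, j <= m /\ t n = TVar m) ->
  stable k R a b -> stable j R (subst_tm s t a) (subst_tm s t b).
Proof.
  intros Ht H s2 u Hu. rewrite !subst_subst_tm. apply H.
  intros n Hn. destruct (Ht n Hn) as (m & Hm & ->). simpl. apply Hu; auto.
Qed.

Lemma stable_ren k j R (a b : tm) xi z :
  (forall n, k <= n -> j <= z n) ->
  stable k R a b -> stable j R (ren_tm xi z a) (ren_tm xi z b).
Proof.
  intros Hz H. rewrite !(proj2 ren_as_subst). apply stable_subst with k; auto.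
  intros n Hn; exists (z n); auto.
Qed.

(** * The relation [sim] *)

Inductive sim_ty : nat -> ty -> ty -> Prop :=
| sim_TBase k b : sim_ty k (TBase b) (TBase b)
| sim_TVar k n : sim_ty k (TVar n) (TVar n)
| sim_TArr k T1 T2 T1' T2' :
    sim_ty k T1 T1' -> sim_ty k T2 T2' -> sim_ty k (TArr T1 T2) (TArr T1' T2')
| sim_TAll k T T' : sim_ty (S k) T T' -> sim_ty k (TAll T) (TAll T')
| sim_TRef k T e T' e' : sim_ty k T T' -> sim k e e' -> sim_ty k (TRef T e) (TRef T' e')
with sim : nat -> tm -> tm -> Prop :=
| sim_step k a a' b : stable k fstep a a' -> sim k a' b -> sim k a b
| sim_blame k l b : stable k steps b (tBlame l) -> sim k (tBlame l) b
| sim_const k c : sim k (tConst c) (tConst c)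
| sim_var k n : sim k (tVar n) (tVar n)
| sim_op k o l l' : sim_list k l l' -> sim k (tOp o l) (tOp o l')
| sim_abs k T e T' e' : sim_ty k T T' -> sim k e e' -> sim k (tAbs T e) (tAbs T' e')
| sim_tabs k e e' : sim (S k) e e' -> sim k (tTAbs e) (tTAbs e')
| sim_cast k T1 T2 T1' T2' l :
    sim_ty k T1 T1' -> sim_ty k T2 T2' -> sim k (tCast T1 T2 l) (tCast T1' T2' l)
| sim_app k a b a' b' : sim k a a' -> sim k b b' -> sim k (tApp a b) (tApp a' b')
| sim_tapp k a T a' T' : sim k a a' -> sim_ty k T T' -> sim k (tTApp a T) (tTApp a' T')
| sim_wait k T p e l T' p' e' :
    sim_ty k T T' -> sim k p p' -> sim k e e' -> sim k (tWait T p e l) (tWait T' p' e' l)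
| sim_active k T p e v l T' p' e' v' :
    sim_ty k T T' -> sim k p p' -> sim k e e' -> sim k v v' -> is_value v ->
    sim k (tActive T p e v l) (tActive T' p' e' v' l)
with sim_list : nat -> list tm -> list tm -> Prop :=
| sim_nil k : sim_list k nil nil
| sim_cons k a a' l l' : sim k a a' -> sim_list k l l' -> sim_list k (a :: l) (a' :: l').

Scheme sim_ty_mut := Induction for sim_ty Sort Prop
with sim_mut := Induction for sim Sort Prop
with sim_list_mut := Induction for sim_list Sort Prop.
Combined Scheme sim_ind_all from sim_ty_mut, sim_mut, sim_list_mut.

Lemma sim_refl :
  (forall (T : ty), wf_ty T -> forall k, sim_ty k T T) /\
  (forall (e : tm), wf_tm e -> forall k, sim k e e).
Proof.
  apply syntax_ind; simpl; intros; try solve [constructor; intuition eauto].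
  - constructor. induction H; simpl in *; constructor; intuition.
  - apply sim_blame; intros s t _; constructor.
Qed.

Lemma sim_ren :
  (forall k (T T' : ty), sim_ty k T T' -> forall j xi z, (forall n, k <= n -> j <= z n) ->
     sim_ty j (ren_ty xi z T) (ren_ty xi z T')) /\
  (forall k (a b : tm), sim k a b -> forall j xi z, (forall n, k <= n -> j <= z n) ->
     sim j (ren_tm xi z a) (ren_tm xi z b)) /\
  (forall k (l l' : list tm), sim_list k l l' -> forall j xi z, (forall n, k <= n -> j <= z n) ->
     sim_list j (map (ren_tm xi z) l) (map (ren_tm xi z) l')).
Proof.
  apply sim_ind_all; intros; simpl; try solve [constructor; eauto using value_ren].
  - constructor. apply H. intros [|n] Hn; simpl; [lia|]. specialize (H0 n). lia.
  - econstructor; eauto. eapply stable_ren; eauto.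
  - apply sim_blame. change (tBlame l) with (ren_tm xi z (tBlame l)). eapply stable_ren; eauto.
  - constructor. apply H. intros [|n] Hn; simpl; [lia|]. specialize (H0 n). lia.
Qed.
Definition sim_ren_ty := proj1 sim_ren.
Definition sim_ren_tm := proj1 (proj2 sim_ren).

Definition sim_ty_renaming (k j : nat) (t t' : nat -> ty) :=
  forall n, k <= n -> exists m, j <= m /\ t n = TVar m /\ t' n = TVar m.

Lemma sim_up_tm_tm j (s s' : nat -> tm) :
  (forall n, sim j (s n) (s' n)) -> forall n, sim j (up_tm_tm s n) (up_tm_tm s' n).
Proof. intros H [|n]; simpl. constructor. apply sim_ren_tm with j; auto. Qed.

Lemma sim_up_tm_ty j (t t' : nat -> ty) :
  (forall n, sim_ty j (t n) (t' n)) -> forall n, sim_ty j (up_tm_ty t n) (up_tm_ty t' n).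
Proof. intros H n; unfold up_tm_ty. apply sim_ren_ty with j; auto. Qed.

Lemma sim_up_ty_tm j (s s' : nat -> tm) :
  (forall n, sim j (s n) (s' n)) -> forall n, sim (S j) (up_ty_tm s n) (up_ty_tm s' n).
Proof. intros H n; unfold up_ty_tm. apply sim_ren_tm with j; auto. intros; lia. Qed.

Lemma sim_up_ty_ty j (t t' : nat -> ty) :
  (forall n, sim_ty j (t n) (t' n)) -> forall n, sim_ty (S j) (up_ty_ty t n) (up_ty_ty t' n).
Proof. intros H [|n]; simpl. constructor. apply sim_ren_ty with j; auto. intros; lia. Qed.

Lemma sim_ty_renaming_up_tm k j t t' :
  sim_ty_renaming k j t t' -> sim_ty_renaming k j (up_tm_ty t) (up_tm_ty t').
Proof.
  intros H n Hn. destruct (H n Hn) as (m & Hm & E1 & E2).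
  exists m; unfold up_tm_ty; rewrite E1, E2; auto.
Qed.

Lemma sim_ty_renaming_up_ty k j t t' :
  sim_ty_renaming k j t t' -> sim_ty_renaming (S k) (S j) (up_ty_ty t) (up_ty_ty t').
Proof.
  intros H [|n] Hn; [lia|]. destruct (H n ltac:(lia)) as (m & Hm & E1 & E2).
  exists (S m); simpl; rewrite E1, E2; simpl; split; [lia|auto].
Qed.

Lemma sim_subst :
  (forall k (T T' : ty), sim_ty k T T' -> forall j s s' t t', (forall n, sim j (s n) (s' n)) ->
     (forall n, sim_ty j (t n) (t' n)) -> sim_ty_renaming k j t t' ->
     sim_ty j (subst_ty s t T) (subst_ty s' t' T')) /\
  (forall k (a b : tm), sim k a b -> forall j s s' t t', (forall n, sim j (s n) (s' n)) ->
     (forall n, sim_ty j (t n) (t' n)) -> sim_ty_renaming k j t t' ->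
     sim j (subst_tm s t a) (subst_tm s' t' b)) /\
  (forall k (l l' : list tm), sim_list k l l' -> forall j s s' t t', (forall n, sim j (s n) (s' n)) ->
     (forall n, sim_ty j (t n) (t' n)) -> sim_ty_renaming k j t t' ->
     sim_list j (map (subst_tm s t) l) (map (subst_tm s' t') l')).
Proof.
  apply sim_ind_all; intros; simpl; auto;
  try solve [constructor; eauto 7 using sim_up_tm_tm, sim_up_tm_ty, sim_up_ty_tm, sim_up_ty_ty,
                                        sim_ty_renaming_up_tm, sim_ty_renaming_up_ty, value_subst].
  - econstructor; eauto. eapply stable_subst; eauto.
    intros n Hn; destruct (H2 n Hn) as (m & ? & ? & ?); eauto.
  - apply sim_blame. change (tBlame l) with (subst_tm s' t' (tBlame l)).
    eapply stable_subst; eauto.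
    intros n Hn; destruct (H1 n Hn) as (m & ? & ? & ?); eauto.
Qed.
Definition sim_subst_tm := proj1 (proj2 sim_subst).

Lemma sim_open_tm (e e' v w : tm) : sim 0 e e' -> sim 0 v w -> sim 0 (open_tm v e) (open_tm w e').
Proof.
  intros. unfold open_tm. apply sim_subst_tm with 0; auto.
  - intros [|n]; simpl; auto. apply sim_var.
  - intros; apply sim_TVar.
  - intros n _. exists n; repeat split; auto; lia.
Qed.

Lemma sim_open_ty (e e' : tm) T T' : sim 1 e e' -> sim_ty 0 T T' -> sim 0 (open_ty T e) (open_ty T' e').
Proof.
  intros. unfold open_ty. apply sim_subst_tm with 1; auto.
  - intros; apply sim_var.
  - intros [|n]; simpl; auto. apply sim_TVar.
  - intros [|n] Hn; [lia|]. exists n; repeat split; auto; lia.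
Qed.

Lemma sim_cast_arr_result T11 T12 T21 T22 T11' T12' T21' T22' l (v w : tm) :
  sim_ty 0 T11 T11' -> sim_ty 0 T12 T12' -> sim_ty 0 T21 T21' -> sim_ty 0 T22 T22' ->
  sim 0 v w -> sim 0 (cast_arr_result T11 T12 T21 T22 l v) (cast_arr_result T11' T12' T21' T22' l w).
Proof.
  intros. unfold cast_arr_result, let_in, sh_ty, sh_tm.
  repeat (apply sim_abs || apply sim_app || apply sim_cast || apply sim_var);
  repeat first [apply sim_ren_ty with 0 | apply sim_ren_tm with 0]; auto.
Qed.

Lemma sim_cast_all_result T1 T2 T1' T2' l (v w : tm) :
  sim_ty 1 T1 T1' -> sim_ty 1 T2 T2' -> sim 0 v w ->
  sim 0 (cast_all_result T1 T2 l v) (cast_all_result T1' T2' l w).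
Proof.
  intros. unfold cast_all_result. apply sim_tabs, sim_app; [apply sim_cast; auto|].
  apply sim_tapp; [|apply sim_TVar]. apply sim_ren_tm with 0; auto. intros; lia.
Qed.

Definition sim_head (a b : tm) : Prop :=
  match a, b with
  | tConst c, tConst c' => c = c'
  | tVar n, tVar n' => n = n'
  | tOp o l, tOp o' l' => o = o' /\ sim_list 0 l l'
  | tAbs T e, tAbs T' e' => sim_ty 0 T T' /\ sim 0 e e'
  | tTAbs e, tTAbs e' => sim 1 e e'
  | tCast T1 T2 l, tCast T1' T2' l' => sim_ty 0 T1 T1' /\ sim_ty 0 T2 T2' /\ l = l'
  | tApp a1 a2, tApp b1 b2 => sim 0 a1 b1 /\ sim 0 a2 b2
  | tTApp a T, tTApp a' T' => sim 0 a a' /\ sim_ty 0 T T'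
  | tWait T p e l, tWait T' p' e' l' => sim_ty 0 T T' /\ sim 0 p p' /\ sim 0 e e' /\ l = l'
  | tActive T p e v l, tActive T' p' e' v' l' =>
      sim_ty 0 T T' /\ sim 0 p p' /\ sim 0 e e' /\ sim 0 v v' /\ is_value v /\ l = l'
  | tBlame l, tBlame l' => l = l'
  | _, _ => False
  end.

Lemma sim_head_sim (a b : tm) : sim_head a b -> sim 0 a b.
Proof.
  destruct a, b; simpl; intros; try contradiction; intuition; subst;
  first [apply sim_blame; intros s t _; constructor | constructor; auto].
Qed.

Lemma sim_inv (a b : tm) : sim 0 a b ->
  (exists c, fstep a c /\ sim 0 c b) \/ (exists l, a = tBlame l /\ steps b (tBlame l)) \/
  sim_head a b.
Proof.
  enough (G : forall k a b, sim k a b -> k = 0 ->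
    (exists c, fstep a c /\ sim 0 c b) \/ (exists l, a = tBlame l /\ steps b (tBlame l)) \/
    sim_head a b) by eauto.
  intros k a' b' H; destruct H; intros Hk; subst; simpl;
    try solve [right; right; repeat split; auto].
  - left. exists a'; split; auto. eapply stable_holds; eauto.
  - right; left. exists l; split; auto. eapply stable_holds; eauto.
Qed.

Lemma sim_left_ind (b : tm) (Q : tm -> Prop) :
  (forall a a', fstep a a' -> Q a' -> Q a) ->
  (forall l, steps b (tBlame l) -> Q (tBlame l)) ->
  (forall a, sim_head a b -> Q a) ->
  forall a, sim 0 a b -> Q a.
Proof.
  intros Hstep Hblame Hhead a H.
  enough (G : forall k a b', sim k a b' -> k = 0 -> b' = b -> Q a) by eauto.
  clear a H. intros k a b' H; induction H; intros Hk Hb; subst;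
    try solve [apply Hhead; simpl; repeat split; auto].
  - eapply Hstep; [eapply stable_holds; eauto | auto].
  - apply Hblame. eapply stable_holds; eauto.
Qed.

Lemma sim_head_value_l (a b : tm) : sim_head a b -> is_value a -> is_value b.
Proof. destruct a, b; simpl; tauto. Qed.

Lemma sim_head_value_r (a b : tm) : sim_head a b -> is_value b -> is_value a.
Proof. destruct a, b; simpl; tauto. Qed.

Lemma sim_value_l (a b : tm) : sim 0 a b -> is_value a -> sim_head a b.
Proof.
  intros H Hv; destruct (sim_inv H) as [(c & Hs & _) | [(l & -> & _) | Ht]]; auto.
  - exfalso; eapply fstep_not_value; eauto.
  - simpl in Hv; tauto.
Qed.

Lemma sim_value_transfer (a b : tm) : sim 0 a b -> is_value a -> is_value b.
Proof. intros; eapply sim_head_value_l; eauto using sim_value_l. Qed.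

Lemma sim_blame_l (b : tm) l : sim 0 (tBlame l) b -> steps b (tBlame l).
Proof.
  intros H; destruct (sim_inv H) as [(c & Hs & _) | [(l' & E & Hs) | Ht]].
  - exfalso; eapply blame_irreducible; eauto.
  - inversion E; subst; auto.
  - destruct b; simpl in Ht; try contradiction; subst; constructor.
Qed.

Lemma sim_value_r (a b : tm) :
  sim 0 a b -> is_value b -> exists a0, steps a a0 /\ is_value a0 /\ sim_head a0 b.
Proof.
  intros H Hv. revert a H. apply sim_left_ind.
  - intros a a' Hs (a0 & ? & ? & ?). exists a0; split; auto. eapply fstep_steps; eauto.
  - intros l Hs. apply steps_from_normal in Hs; [|apply value_normal; auto].
    subst; simpl in Hv; tauto.
  - intros a Ht. exists a; repeat split; auto. constructor. eapply sim_head_value_r; eauto.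
Qed.

Lemma steps_fill F (a a' : tm) :
  frame_ok F -> steps a a' -> (forall l, a' <> tBlame l) -> steps (fill F a) (fill F a').
Proof.
  intros HF; induction 1 as [|a b c Hab Hbc IH]; intros Hn; [constructor|].
  destruct (step_fstep Hab) as [a b Hr | F0 a0 l HF0 Hl].
  - eapply fstep_steps; [apply fstep_red, ctx_red_frame; eauto | auto].
  - apply steps_from_normal in Hbc; [|apply blame_normal]. subst. exfalso; eapply Hn; eauto.
Qed.

Lemma steps_fill_value F (a v : tm) :
  frame_ok F -> steps a v -> is_value v -> steps (fill F a) (fill F v).
Proof. intros; apply steps_fill; auto. intros l ->; simpl in *; auto. Qed.

Lemma steps_fill_blame F (a : tm) l :
  frame_ok F -> steps a (tBlame l) -> steps (fill F a) (tBlame l).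
Proof.
  intros HF H; remember (tBlame l) as bl; induction H as [|a b c Hab Hbc IH]; subst.
  - apply steps_one, fstep_blame; auto. constructor.
  - destruct (step_fstep Hab) as [a b Hr | F0 a0 l' HF0 Hl].
    + eapply fstep_steps; [apply fstep_red, ctx_red_frame; eauto | auto].
    + apply steps_from_normal in Hbc; [|apply blame_normal]. inversion Hbc; subst.
      apply steps_one, fstep_blame; auto. apply raises_frame; auto.
Qed.

Definition sim_frame (F F' : frame) : Prop :=
  match F, F' with
  | FOp o vs es, FOp o' vs' es' => o = o' /\ sim_list 0 vs vs' /\ sim_list 0 es es'
  | FAppL e, FAppL e' => sim 0 e e'
  | FAppR v, FAppR v' => sim 0 v v'
  | FTApp T, FTApp T' => sim_ty 0 T T'
  | FWait T p l, FWait T' p' l' => sim_ty 0 T T' /\ sim 0 p p' /\ l = l'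
  | FActive T p v l, FActive T' p' v' l' =>
      sim_ty 0 T T' /\ sim 0 p p' /\ sim 0 v v' /\ is_value v /\ l = l'
  | _, _ => False
  end.

Lemma sim_list_app k (l1 l1' l2 l2' : list tm) :
  sim_list k l1 l1' -> sim_list k l2 l2' -> sim_list k (l1 ++ l2) (l1' ++ l2').
Proof. induction 1; simpl; intros; auto. constructor; auto. Qed.

Lemma sim_list_app_inv_l k (vs es L : list tm) a : sim_list k (vs ++ a :: es) L ->
  exists vs' b es', L = vs' ++ b :: es' /\ sim_list k vs vs' /\ sim k a b /\ sim_list k es es'.
Proof.
  revert L; induction vs; simpl; intros L H; inversion H; subst.
  - exists nil, a', l'; simpl; repeat split; auto. constructor.
  - destruct (IHvs _ H5) as (vs' & b & es' & -> & ? & ? & ?).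
    exists (a' :: vs'), b, es'; simpl; repeat split; auto. constructor; auto.
Qed.

Lemma sim_list_app_inv_r k (vs es L : list tm) b : sim_list k L (vs ++ b :: es) ->
  exists vs' a es', L = vs' ++ a :: es' /\ sim_list k vs' vs /\ sim k a b /\ sim_list k es' es.
Proof.
  revert L; induction vs; simpl; intros L H; inversion H; subst.
  - exists nil, a, l; simpl; repeat split; auto. constructor.
  - destruct (IHvs _ H5) as (vs' & b' & es' & -> & ? & ? & ?).
    exists (a0 :: vs'), b', es'; simpl; repeat split; auto. constructor; auto.
Qed.

Lemma sim_head_fill_l F (a b : tm) :
  sim_head (fill F a) b -> exists F' b0, b = fill F' b0 /\ sim_frame F F' /\ sim 0 a b0.
Proof.
  destruct F; simpl; intros H; destruct b; simpl in H; try contradiction.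
  - destruct H as [<- H]. apply sim_list_app_inv_l in H.
    destruct H as (vs' & b & es' & -> & ? & ? & ?).
    exists (FOp o vs' es'), b; simpl; repeat split; auto.
  - destruct H; exists (FAppL b2), b1; simpl; repeat split; auto.
  - destruct H; exists (FAppR b1), b2; simpl; repeat split; auto.
  - destruct H; exists (FTApp t0), b; simpl; repeat split; auto.
  - destruct H as (? & ? & ? & <-); exists (FWait t1 b1 l), b2; simpl; repeat split; auto.
  - destruct H as (? & ? & ? & ? & ? & <-); exists (FActive t2 b1 b3 l), b2.
    simpl; repeat split; auto.
Qed.

Lemma sim_head_fill_r F (a b : tm) :
  sim_head a (fill F b) -> exists F' a0, a = fill F' a0 /\ sim_frame F' F /\ sim 0 a0 b.
Proof.
  destruct F; simpl; intros H; destruct a; simpl in H; try contradiction.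
  - destruct H as [-> H]. apply sim_list_app_inv_r in H.
    destruct H as (vs' & a & es' & -> & ? & ? & ?).
    exists (FOp o vs' es'), a; simpl; repeat split; auto.
  - destruct H; exists (FAppL a2), a1; simpl; repeat split; auto.
  - destruct H; exists (FAppR a1), a2; simpl; repeat split; auto.
  - destruct H; exists (FTApp t0), a; simpl; repeat split; auto.
  - destruct H as (? & ? & ? & ->); exists (FWait t1 a1 l), a2; simpl; repeat split; auto.
  - destruct H as (? & ? & ? & ? & ? & ->); exists (FActive t2 a1 a3 l), a2.
    simpl; repeat split; auto.
Qed.

Lemma sim_fill F F' (a b : tm) : sim_frame F F' -> sim 0 a b -> sim 0 (fill F a) (fill F' b).
Proof.
  intros H1 H2; apply sim_head_sim; destruct F, F'; simpl in *; try contradiction; intuition.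
  apply sim_list_app; auto. constructor; auto.
Qed.

Lemma sim_list_values (l l' : list tm) :
  sim_list 0 l l' -> Forall (@is_value Sg) l -> Forall (@is_value Sg) l'.
Proof.
  intros H; remember 0 as k; induction H; intros Hf; subst; inversion Hf; subst;
  constructor; eauto using sim_value_transfer.
Qed.

Lemma sim_frame_ok F F' : sim_frame F F' -> frame_ok F -> frame_ok F'.
Proof.
  destruct F, F'; simpl; intros; try contradiction; intuition;
  eauto using sim_value_transfer, sim_list_values.
Qed.

Lemma sim_list_eval (l ws : list tm) : sim_list 0 l ws -> Forall (@is_value Sg) ws ->
  exists vs, Forall (@is_value Sg) vs /\ sim_list 0 vs ws /\
    forall o pre post, Forall (@is_value Sg) pre ->
      steps (tOp o (pre ++ l ++ post)) (tOp o (pre ++ vs ++ post)).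
Proof.
  intros H; remember 0 as k; induction H as [|k a a' l l' Ha Hl IH]; intros Hw; subst.
  - exists nil; repeat split; auto. constructor. intros; constructor.
  - inversion Hw as [|? ? Hva' Hw']; subst. destruct IH as (vs & Hv & Hp & Hs); auto.
    destruct (sim_value_r Ha Hva') as (a0 & Ha0 & Hva & Hta).
    exists (a0 :: vs); repeat split.
    + constructor; auto.
    + constructor; auto using sim_head_sim.
    + intros o pre post Hpre. eapply steps_trans.
      * apply (steps_fill_value (F := FOp o pre (l ++ post))); simpl; eauto.
      * simpl. specialize (Hs o (pre ++ [a0]) post).
        rewrite <- !app_assoc in Hs. apply Hs. apply Forall_app; auto.
Qed.

Lemma sim_frame_ok_r F' F : sim_frame F' F -> frame_ok F ->
  exists F0, (forall x, steps (fill F' x) (fill F0 x)) /\ sim_frame F0 F /\ frame_ok F0.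
Proof.
  destruct F', F; simpl; intros H Hok; try contradiction.
  - destruct H as (<- & H1 & H2). destruct (sim_list_eval H1 Hok) as (vs & Hv & Hp & Hs).
    exists (FOp o vs l0); simpl; repeat split; auto.
    intros x. specialize (Hs o nil (x :: l0) (Forall_nil _)). simpl in Hs. auto.
  - exists (FAppL t); simpl; repeat split; auto. intros; constructor.
  - destruct (sim_value_r H Hok) as (a0 & Ha & Hva & Hta).
    exists (FAppR a0); simpl; repeat split; auto using sim_head_sim.
    intros x. apply (steps_fill_value (F := FAppL x)); simpl; auto.
  - exists (FTApp t); simpl; repeat split; auto. intros; constructor.
  - exists (FWait t t0 l); simpl; repeat split; auto; try tauto. intros; constructor.
  - exists (FActive t t0 t1 l); simpl; repeat split; auto; try tauto. intros; constructor.
Qed.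

Lemma raises_sim_r (b : tm) l : raises b l -> forall a, sim 0 a b -> steps a (tBlame l).
Proof.
  induction 1 as [l | F b l HF Hb IH]; intros a0 Ha; revert a0 Ha; apply sim_left_ind.
  - intros; eapply fstep_steps; eauto.
  - intros l' Hs. apply steps_from_normal in Hs; [|apply blame_normal].
    inversion Hs; subst; constructor.
  - intros a Ht; destruct a; simpl in Ht; try contradiction; subst; constructor.
  - intros; eapply fstep_steps; eauto.
  - intros l' Hs. assert (Hs2 : steps (fill F b) (tBlame l)) by (apply steps_one, fstep_blame; auto).
    apply (steps_to_normal Hs2) in Hs; [|apply blame_normal].
    apply steps_from_normal in Hs; [|apply blame_normal]. inversion Hs; subst; constructor.
  - intros a0 Ht. destruct (sim_head_fill_r Ht) as (F' & a1 & -> & HF' & Ha1).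
    destruct (sim_frame_ok_r HF' HF) as (F0 & Hs & HF0 & Hok0).
    eapply steps_trans; [apply Hs|]. apply steps_fill_blame; auto.
Qed.

Lemma raises_sim_l (a : tm) l : raises a l -> forall b, sim 0 a b -> steps b (tBlame l).
Proof.
  induction 1 as [l | F a l HF Ha IH]; intros b H.
  - apply sim_blame_l; auto.
  - destruct (sim_inv H) as [(c & Hs & Hp) | [(l' & E & _) | Ht]].
    + assert (c = tBlame l) by (eapply fstep_det; eauto; apply fstep_blame; auto). subst.
      apply sim_blame_l; auto.
    + exfalso; eapply fill_not_blame; eauto.
    + destruct (sim_head_fill_l Ht) as (F' & b0 & -> & HF' & Hp).
      apply steps_fill_blame; eauto using sim_frame_ok.
Qed.

(** * Matching steps across [sim] *)

Lemma sim_ty_refinement k (T T' : ty) : sim_ty k T T' -> (is_refinement T <-> is_refinement T').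
Proof. destruct 1; simpl; tauto. Qed.

Lemma sim_list_consts_l (ks : list (const Sg)) L : sim_list 0 (map tConst ks) L -> L = map tConst ks.
Proof.
  revert L; induction ks; simpl; intros L H; inversion H as [|? ? ? ? ? Hp Hl]; subst; auto.
  apply sim_value_l in Hp; [|simpl; auto]. destruct a'; simpl in Hp; try contradiction; subst.
  f_equal; auto.
Qed.

Lemma sim_list_consts_r (ks : list (const Sg)) L :
  sim_list 0 L (map tConst ks) -> Forall (@is_value Sg) L -> L = map tConst ks.
Proof.
  revert L; induction ks; simpl; intros L H Hv; inversion H as [|? ? ? ? ? Hp Hl]; subst; auto.
  inversion Hv as [|? ? Hv1 Hv2]; subst.
  apply sim_value_l in Hp; auto. destruct a0; simpl in Hp; try contradiction; subst.
  f_equal; auto.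
Qed.

Lemma sim_head_cast_app T1 T2 l (v b : tm) :
  sim_head (tApp (tCast T1 T2 l) v) b -> is_value v ->
  exists T1' T2' w, b = tApp (tCast T1' T2' l) w /\
    sim_ty 0 T1 T1' /\ sim_ty 0 T2 T2' /\ sim 0 v w /\ is_value w.
Proof.
  destruct b; simpl; intros Ht Hv; try contradiction. destruct Ht as [Hc Hvw].
  apply sim_value_l in Hc; [|simpl; auto].
  destruct b1; simpl in Hc; try contradiction. destruct Hc as (? & ? & <-).
  exists t, t0, b2; repeat split; eauto using sim_value_transfer.
Qed.

Lemma red_cast_sim_forward T1 T2 l (v a1 b : tm) :
  red (tApp (tCast T1 T2 l) v) a1 -> sim_head (tApp (tCast T1 T2 l) v) b ->
  exists b1, red b b1 /\ sim 0 a1 b1.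
Proof.
  intros Hr Ht.
  assert (Hv : is_value v) by (inversion Hr; auto).
  destruct (sim_head_cast_app Ht Hv) as (T1' & T2' & w & -> & HT1 & HT2 & Hvw & Hw).
  inversion Hr; subst.
  - inversion HT1; inversion HT2; subst.
    eexists; split; [apply red_cast_base | ]; auto.
  - inversion HT1; inversion HT2; subst.
    eexists; split; [apply red_cast_fun | apply sim_cast_arr_result]; auto.
  - inversion HT1; inversion HT2; subst.
    eexists; split; [apply red_cast_forall | apply sim_cast_all_result]; auto.
  - inversion HT1; subst.
    eexists; split; [apply red_cast_forget; auto | ].
    apply sim_head_sim; simpl; split; auto. apply sim_head_sim; simpl; auto.
  - inversion HT2; subst.
    eexists; split; [apply red_cast_precheck; auto; rewrite <- (sim_ty_refinement HT1); auto|].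
    apply sim_head_sim; simpl; repeat split; auto.
    apply sim_head_sim; simpl; split; auto. apply sim_head_sim; simpl; auto.
Qed.

Lemma red_sim_forward (a a1 b : tm) :
  red a a1 -> sim_head a b -> exists b1, red b b1 /\ sim 0 a1 b1.
Proof.
  intros Hr Ht; pose proof Hr as Hr'.
  destruct Hr' as [o ks k Hk | T e v Hv | e T | | | | | | T e v l Hv | T e v l Hv | T e v l Hv];
    try solve [eapply red_cast_sim_forward; eauto].
  - destruct b; simpl in Ht; try contradiction. destruct Ht as [<- Hl].
    apply sim_list_consts_l in Hl; subst.
    eexists; split; [apply red_op; eauto | apply sim_head_sim; simpl; auto].
  - destruct b; simpl in Ht; try contradiction. destruct Ht as [Habs Hvw].
    apply sim_value_l in Habs; [|simpl; auto].
    destruct b1; simpl in Habs; try contradiction. destruct Habs.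
    eexists; split; [apply red_beta; eauto using sim_value_transfer | apply sim_open_tm; auto].
  - destruct b; simpl in Ht; try contradiction. destruct Ht as [Habs HT].
    apply sim_value_l in Habs; [|simpl; auto].
    destruct b; simpl in Habs; try contradiction.
    eexists; split; [apply red_tbeta | apply sim_open_ty; auto].
  - destruct b; simpl in Ht; try contradiction. destruct Ht as (HT & Hp & He & <-).
    eexists; split; [apply red_check; eauto using sim_value_transfer | ].
    apply sim_head_sim; simpl; repeat split; auto using sim_open_tm.
  - destruct b; simpl in Ht; try contradiction. destruct Ht as (HT & Hp & He & Hvw & _ & <-).
    apply sim_value_l in He; [|simpl; auto]. destruct b2; simpl in He; try contradiction; subst.
    eexists; split; [apply red_ok; eauto using sim_value_transfer | auto].
  - destruct b; simpl in Ht; try contradiction. destruct Ht as (HT & Hp & He & Hvw & _ & <-).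
    apply sim_value_l in He; [|simpl; auto]. destruct b2; simpl in He; try contradiction; subst.
    eexists; split; [apply red_fail; eauto using sim_value_transfer | apply sim_head_sim; simpl; auto].
Qed.

Definition redex_ready (a : tm) : Prop :=
  match a with
  | tOp _ es => Forall (@is_value Sg) es
  | tApp a1 a2 => is_value a1 /\ is_value a2
  | tTApp a _ => is_value a
  | tWait _ _ e _ => is_value e
  | tActive _ _ e _ _ => is_value e
  | _ => True
  end.

Lemma red_ready (a b : tm) : red a b -> redex_ready a.
Proof.
  destruct 1; simpl; auto.
  apply Forall_map, Forall_forall; simpl; auto.
Qed.

Lemma sim_head_ready_r (a b : tm) : sim_head a b -> redex_ready b ->
  exists a', steps a a' /\ redex_ready a' /\ sim_head a' b.
Proof.
  intros Ht Hb; destruct b; destruct a; simpl in Ht, Hb; try contradiction;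
    try solve [eexists; split; [apply steps_refl | simpl; auto]].
  - destruct Ht as [-> Hl]. destruct (sim_list_eval Hl Hb) as (vs & Hv & Hvs & Hs).
    exists (tOp o vs); repeat split; auto.
    specialize (Hs o nil nil (Forall_nil _)). rewrite !app_nil_r in Hs. auto.
  - destruct Ht as [H1 H2], Hb as [Hb1 Hb2].
    destruct (sim_value_r H1 Hb1) as (a1' & Hs1 & Hv1 & Ht1).
    destruct (sim_value_r H2 Hb2) as (a2' & Hs2 & Hv2 & Ht2).
    exists (tApp a1' a2'); repeat split; auto using sim_head_sim.
    apply steps_trans with (tApp a1' a2).
    + apply (steps_fill_value (F := FAppL a2)); simpl; auto.
    + apply (steps_fill_value (F := FAppR a1')); simpl; auto.
  - destruct Ht as [H1 H2]. destruct (sim_value_r H1 Hb) as (a' & Hs & Hv & Ht').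
    exists (tTApp a' t0); repeat split; auto using sim_head_sim.
    apply (steps_fill_value (F := FTApp t0)); simpl; auto.
  - destruct Ht as (H1 & H2 & H3 & ->). destruct (sim_value_r H3 Hb) as (a' & Hs & Hv & Ht').
    exists (tWait t0 a1 a' l); repeat split; auto using sim_head_sim.
    apply (steps_fill_value (F := FWait t0 a1 l)); simpl; auto.
  - destruct Ht as (H1 & H2 & H3 & H4 & H5 & ->).
    destruct (sim_value_r H3 Hb) as (a' & Hs & Hv & Ht').
    exists (tActive t0 a1 a' a3 l); repeat split; auto using sim_head_sim.
    apply (steps_fill_value (F := FActive t0 a1 a3 l)); simpl; auto.
Qed.

Lemma sim_value_cast_r (a : tm) T1 T2 l : sim 0 a (tCast T1 T2 l) -> is_value a ->
  exists T1' T2', a = tCast T1' T2' l /\ sim_ty 0 T1' T1 /\ sim_ty 0 T2' T2.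
Proof.
  intros H Ha; apply sim_value_l in H; auto.
  destruct a; simpl in H; try contradiction. destruct H as (HT1 & HT2 & ->); eauto.
Qed.

Lemma red_sim_head_r (a b b1 : tm) : red b b1 -> sim_head a b -> redex_ready a ->
  exists a1, red a a1.
Proof.
  intros Hr Ht Ha; destruct Hr; destruct a; simpl in Ht, Ha; try contradiction.
  - destruct Ht as [-> Hl]. rewrite (sim_list_consts_r Hl Ha). eexists; apply red_op; eauto.
  - destruct Ht as [H1 _], Ha as [Ha1 Ha2]. apply sim_value_l in H1; auto.
    destruct a1; simpl in H1; try contradiction. eexists; apply red_beta; auto.
  - destruct Ht as [H1 _]. apply sim_value_l in H1; auto.
    destruct a; simpl in H1; try contradiction. eexists; apply red_tbeta.
  - destruct Ht as [H1 _], Ha as [Ha1 Ha2].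
    destruct (sim_value_cast_r H1 Ha1) as (T1' & T2' & -> & HT1 & HT2).
    inversion HT1; inversion HT2; subst. eexists; apply red_cast_base; auto.
  - destruct Ht as [H1 _], Ha as [Ha1 Ha2].
    destruct (sim_value_cast_r H1 Ha1) as (T1' & T2' & -> & HT1 & HT2).
    inversion HT1; inversion HT2; subst. eexists; apply red_cast_fun; auto.
  - destruct Ht as [H1 _], Ha as [Ha1 Ha2].
    destruct (sim_value_cast_r H1 Ha1) as (T1' & T2' & -> & HT1 & HT2).
    inversion HT1; inversion HT2; subst. eexists; apply red_cast_forall; auto.
  - destruct Ht as [H1 _], Ha as [Ha1 Ha2].
    destruct (sim_value_cast_r H1 Ha1) as (T1' & T2' & -> & HT1 & HT2).
    inversion HT1; subst. eexists; apply red_cast_forget; auto.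
  - destruct Ht as [H1 _], Ha as [Ha1 Ha2].
    destruct (sim_value_cast_r H1 Ha1) as (T1' & T2' & -> & HT1 & HT2).
    inversion HT2; subst. eexists; apply red_cast_precheck; auto.
    rewrite (sim_ty_refinement HT1); auto.
  - eexists; apply red_check; auto.
  - destruct Ht as (_ & _ & He & _ & Hv & _). apply sim_value_l in He; auto.
    destruct a2; simpl in He; try contradiction; subst. eexists; apply red_ok; auto.
  - destruct Ht as (_ & _ & He & _ & Hv & _). apply sim_value_l in He; auto.
    destruct a2; simpl in He; try contradiction; subst. eexists; apply red_fail; auto.
Qed.

Lemma red_sim_backward (a b b1 : tm) : red b b1 -> sim_head a b ->
  exists a1, steps a a1 /\ sim 0 a1 b1.
Proof.
  intros Hr Ht.
  (* Once its value positions are evaluated, [a] is a redex; its reduct is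
     matched by a reduct of [b], which is [b1] by determinism. *)
  destruct (sim_head_ready_r Ht (red_ready Hr)) as (a' & Hs & Hready & Ht').
  destruct (red_sim_head_r Hr Ht' Hready) as (a1 & Ha1).
  destruct (red_sim_forward Ha1 Ht') as (b1' & Hb1' & Hsim).
  rewrite (red_det Hr Hb1'). exists a1; split; auto.
  eapply steps_trans; [exact Hs | apply steps_one, fstep_red, ctx_red_here, Ha1].
Qed.

Lemma sim_steps_l (a a' b : tm) : steps a a' -> sim 0 a' b -> sim 0 a b.
Proof.
  induction 1 as [|a a'' c Ha Hc IH]; auto. intros H.
  eapply sim_step; [apply fstep_stable, step_fstep, Ha | auto].
Qed.

Lemma sim_blame_steps (b : tm) l : steps b (tBlame l) -> sim 0 (tBlame l) b.
Proof. intros; apply sim_blame, steps_stable; auto. Qed.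

Lemma blame_or_not (b : tm) : (exists l, b = tBlame l) \/ (forall l, b <> tBlame l).
Proof. destruct b; try (right; intros; discriminate). left; eauto. Qed.

Lemma ctx_red_sim_forward (a a1 : tm) : ctx_red a a1 ->
  forall b, sim 0 a b -> exists b1, steps b b1 /\ sim 0 a1 b1.
Proof.
  induction 1 as [a a1 Hr | F a a1 HF Ha IH]; intros b Hp;
  destruct (sim_inv Hp) as [(c & Hs & Hc) | [(l & E & _) | Ht]].
  - rewrite (fstep_det Hs (fstep_red (ctx_red_here Hr))) in Hc. exists b; split; auto. constructor.
  - subst; inversion Hr.
  - destruct (red_sim_forward Hr Ht) as (b1 & Hb & Hb1).
    exists b1; split; auto. apply steps_one, fstep_red, ctx_red_here, Hb.
  - rewrite (fstep_det Hs (fstep_red (ctx_red_frame HF Ha))) in Hc.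
    exists b; split; auto. constructor.
  - exfalso; eapply fill_not_blame; eauto.
  - destruct (sim_head_fill_l Ht) as (F' & b0 & -> & HF' & Hp0).
    destruct (IH _ Hp0) as (b1 & Hs & Hp1).
    pose proof (sim_frame_ok HF' HF) as HFok.
    destruct (blame_or_not b1) as [(l & ->) | Hnb].
    + exists (tBlame l); split; [apply steps_fill_blame; auto|].
      apply sim_steps_l with (tBlame l); [|apply sim_blame_steps; constructor].
      apply steps_fill_blame; auto. eapply raises_sim_r; [apply raises_here | exact Hp1].
    + exists (fill F' b1); split; [apply steps_fill; auto|].
      apply sim_fill; auto.
Qed.

Lemma fstep_sim_forward (a a1 b : tm) : fstep a a1 -> sim 0 a b ->
  exists b1, steps b b1 /\ sim 0 a1 b1.
Proof.
  destruct 1 as [a a1 Hr | F a l HF Hl]; intros Hp.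
  - eapply ctx_red_sim_forward; eauto.
  - exists (tBlame l); split.
    + eapply raises_sim_l; [apply raises_frame; eauto | exact Hp].
    + apply sim_head_sim; simpl; auto.
Qed.

Lemma ctx_red_sim_backward (b b1 : tm) : ctx_red b b1 ->
  forall a, sim 0 a b -> exists a1, steps a a1 /\ sim 0 a1 b1.
Proof.
  assert (Hblame : forall b b1 l, fstep b b1 -> steps b (tBlame l) ->
            exists a1, steps (tBlame l) a1 /\ sim 0 a1 b1).
  { intros b0 b2 l Hs Hb. exists (tBlame l); split; [constructor|].
    apply sim_blame_steps. eapply steps_to_normal; eauto using blame_normal, steps_one. }
  induction 1 as [b b1 Hr | F b b1 HF Hb IH]; intros a0 Ha; revert a0 Ha; apply sim_left_ind.
  - intros x x' Hs (a1 & ? & ?); exists a1; split; auto; eapply fstep_steps; eauto.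
  - intros l Hs; eapply Hblame; eauto. apply fstep_red, ctx_red_here; auto.
  - intros x Ht. apply (red_sim_backward Hr Ht).
  - intros x x' Hs (a1 & ? & ?); exists a1; split; auto; eapply fstep_steps; eauto.
  - intros l Hs; eapply Hblame; eauto. apply fstep_red, ctx_red_frame; auto.
  - intros x Ht. destruct (sim_head_fill_r Ht) as (F' & a0 & -> & HF' & Ha0).
    destruct (sim_frame_ok_r HF' HF) as (F0 & Hs0 & HF0 & Hok0).
    destruct (IH _ Ha0) as (a1 & Hs & Ha1).
    destruct (blame_or_not a1) as [(l & ->) | Hnb].
    + exists (tBlame l); split.
      * eapply steps_trans; [apply Hs0|]. apply steps_fill_blame; auto.
      * apply sim_blame_steps. apply steps_fill_blame; auto. apply sim_blame_l; auto.
    + exists (fill F0 a1); split.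
      * eapply steps_trans; [apply Hs0|]. apply steps_fill; auto.
      * apply sim_fill; auto.
Qed.

Lemma fstep_sim_backward (a b b1 : tm) : fstep b b1 -> sim 0 a b ->
  exists a1, steps a a1 /\ sim 0 a1 b1.
Proof.
  destruct 1 as [b b1 Hr | F b l HF Hl]; intros Hp.
  - eapply ctx_red_sim_backward; eauto.
  - exists (tBlame l); split.
    + eapply raises_sim_r; [apply raises_frame; eauto | exact Hp].
    + apply sim_head_sim; simpl; auto.
Qed.

Lemma steps_value_sim_forward (a v : tm) : steps a v -> is_value v ->
  forall b, sim 0 a b -> exists w, steps b w /\ is_value w /\ sim_head v w.
Proof.
  induction 1 as [a | a a' v Ha Hv IH]; intros Hval b Hp.
  - exists b; repeat split; auto using sim_value_l. constructor. eapply sim_value_transfer; eauto.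
  - destruct (fstep_sim_forward (step_fstep Ha) Hp) as (b1 & Hs1 & Hp1).
    destruct (IH Hval _ Hp1) as (w & ? & ? & ?).
    exists w; repeat split; auto. eapply steps_trans; eauto.
Qed.

Lemma steps_value_sim_backward (b w : tm) : steps b w -> is_value w ->
  forall a, sim 0 a b -> exists v, steps a v /\ is_value v /\ sim_head v w.
Proof.
  induction 1 as [b | b b' w Hb Hw IH]; intros Hval a Hp.
  - apply sim_value_r; auto.
  - destruct (fstep_sim_backward (step_fstep Hb) Hp) as (a1 & Hs1 & Hp1).
    destruct (IH Hval _ Hp1) as (v & ? & ? & ?).
    exists v; repeat split; auto. eapply steps_trans; eauto.
Qed.

Lemma sim_subst_var_step (e e1 e2 : tm) x : wf_tm e -> wf_tm e2 -> step e1 e2 ->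
  sim 0 (subst_var x e1 e) (subst_var x e2 e).
Proof.
  intros He He2 Hs. unfold subst_var. apply sim_subst_tm with 0.
  - apply (proj2 sim_refl); auto.
  - intros n. destruct (Nat.eqb n x).
    + eapply sim_step; [apply fstep_stable, step_fstep, Hs | apply (proj2 sim_refl); auto].
    + apply sim_var.
  - intros; apply sim_TVar.
  - intros n _; exists n; repeat split; auto; lia.
Qed.

Lemma sim_head_true_l (w : tm) : sim_head (tConst (ctrue Sg)) w -> w = tConst (ctrue Sg).
Proof. destruct w; simpl; intros; subst; easy. Qed.

Lemma sim_head_true_r (v : tm) : sim_head v (tConst (ctrue Sg)) -> v = tConst (ctrue Sg).
Proof. destruct v; simpl; intros; subst; easy. Qed.

End Cotermination.

Theorem mainTheorem5 :
  forall (S : signature) (e e1 e2 : tm S) (x : nat),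
    wf_tm e -> wf_tm e1 -> wf_tm e2 ->
    step e1 e2 ->
    (forall v1, is_value v1 -> steps (subst_var x e1 e) v1 ->
       exists v2, is_value v2 /\ steps (subst_var x e2 e) v2 /\
         (v1 = tConst (ctrue S) -> v2 = tConst (ctrue S)))
    /\
    (forall v2, is_value v2 -> steps (subst_var x e2 e) v2 ->
       exists v1, is_value v1 /\ steps (subst_var x e1 e) v1 /\
         (v2 = tConst (ctrue S) -> v1 = tConst (ctrue S))).
Proof.
  intros S e e1 e2 x Hwf _ Hwf2 Hstep.
  pose proof (sim_subst_var_step x Hwf Hwf2 Hstep) as Hsim.
  split.
  - intros v1 Hv1 Hs.
    destruct (steps_value_sim_forward Hs Hv1 Hsim) as (v2 & Hs2 & Hv2 & Hhead).
    exists v2; repeat split; auto. intros ->. apply sim_head_true_l; auto.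
  - intros v2 Hv2 Hs.
    destruct (steps_value_sim_backward Hs Hv2 Hsim) as (v1 & Hs1 & Hv1 & Hhead).
    exists v1; repeat split; auto. intros ->. apply sim_head_true_r; auto.
Qed.
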